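(* Let $C>0$. There is a constant $C_1>0$ depending only on $C$ such that for any image width $w\geqslant2$ and any two lines $l,k$ that are integer at an image of width $w$ with different elevations $e_1\neq e_2$, $$N\bigl(s(l,C)\cap s(k,C)\bigr)\leqslant\frac{C_1 w}{|e_1-e_2|}.$$
   Context: For a line $l\subset\mathbb{R}^2$ and $C>0$, $s(l,C)=\{r\in\mathbb{R}^2\mid\rho(r,l)\leqslant C/2\}$, $\rho$ the Euclidean distance. A line is mostly horizontal inclined to the right if it has equation $y=ax+b$ with $0\leqslant a\leqslant1$; it is integer at an image of width $w$ if $a=\frac{e}{w-1}$ for some $e\in\{0,1,\dots,w-1\}$, called its elevation. For $D\subseteq\mathbb{R}^2$, $N(D)=|\mathbb{Z}^2\cap D|$. *)

From Stdlib Require Import Reals List ZArith.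
From Coquelicot Require Import Coquelicot.
Open Scope R_scope.

Definition point := (R * R)%type.
Definition region := point -> Prop.

Definition euclid (p q : point) : R :=
  sqrt ((fst p - fst q) ^ 2 + (snd p - snd q) ^ 2).

Definition line (a b : R) : region := fun p => snd p = a * fst p + b.

Definition rho (r : point) (l : region) : Rbar :=
  Glb_Rbar (fun d => exists p, l p /\ d = euclid r p).

Definition strip (l : region) (C : R) : region :=
  fun r => Rbar_le (rho r l) (Finite (C / 2)).

(* The line with elevation e in an image of width w:
   y = (e/(w-1)) x + b, e in {0, ..., w-1}. *)
Definition integer_line (w e : nat) (b : R) : region :=
  line (INR e / INR (w - 1)) b.

Definition inter (A B : region) : region := fun r => A r /\ B r.

Definition zpt (z : Z * Z) : point := (IZR (fst z), IZR (snd z)).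

(* N(D) <= M : every finite set of lattice points in D has at most M
   elements (equivalently |Z^2 ∩ D| <= M, finiteness included). *)
Definition N_le (D : region) (M : R) : Prop :=
  forall L : list (Z * Z), NoDup L ->
    (forall z, In z L -> D (zpt z)) -> INR (length L) <= M.

(* A point within distance C/2 of the line y = a x + b lies within vertical distance
   (C/2) sqrt (1 + a^2) <= C of it, since the slopes lie in [0, 1].  For a lattice point
   in both strips, subtracting the two line equations confines its abscissa to an
   interval of length 4C/|a1 - a2| = 4C(w-1)/|e1 - e2|, and for each abscissa its
   ordinate lies in an interval of length 2C.  Counting the lattice points of this
   sheared box gives (4C(w-1)/|e1 - e2| + 2)(2C + 2) <= (4C+2)(2C+2) w/|e1 - e2|,
   because |e1 - e2| <= w - 1. *)
From Stdlib Require Import Reals List ZArith.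
From Coquelicot Require Import Coquelicot.
From Stdlib Require Import Lra Lia.
Open Scope R_scope.

Lemma line_gap_le_dist (a b : R) (r p : point) :
  line a b p -> Rabs (snd r - a * fst r - b) <= sqrt (1 + a ^ 2) * euclid r p.
Proof.
  destruct r as [x y], p as [u v]; unfold line, euclid; simpl; intros ->.
  rewrite <- sqrt_mult_alt by nra.
  rewrite <- sqrt_Rsqr_abs; apply sqrt_le_1_alt; unfold Rsqr.
  (* Cauchy-Schwarz: the difference of the two sides is (a (y - a u - b) + (x - u))^2. *)
  assert (0 <= (a * (y - (a * u + b)) + (x - u)) ^ 2) by apply pow2_ge_0.
  nra.
Qed.

Lemma one_le_sqrt_1_add_sqr (a : R) : 1 <= sqrt (1 + a ^ 2).
Proof. rewrite <- sqrt_1 at 1; apply sqrt_le_1_alt; pose proof (pow2_ge_0 a); lra. Qed.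

Lemma strip_line_gap (a b C : R) (r : point) :
  strip (line a b) C r -> Rabs (snd r - a * fst r - b) <= C / 2 * sqrt (1 + a ^ 2).
Proof.
  intros Hs.
  set (s := sqrt (1 + a ^ 2)).
  assert (Hs1 : 1 <= s) by apply one_le_sqrt_1_add_sqr.
  assert (Hlb : Rbar_le (Finite (Rabs (snd r - a * fst r - b) / s)) (rho r (line a b))).
  { apply Glb_Rbar_correct; intros d [p [Hp ->]]; simpl.
    apply Rmult_le_reg_l with s; [lra|].
    field_simplify; [apply line_gap_le_dist; exact Hp | lra]. }
  pose proof (Rbar_le_trans _ _ _ Hlb Hs) as Hle; simpl in Hle.
  apply Rmult_le_reg_r with (/ s); [apply Rinv_0_lt_compat; lra|].
  replace (C / 2 * s * / s) with (C / 2) by (field; lra).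
  exact Hle.
Qed.

Lemma strip_line_vertical (a b C x y : R) :
  Rabs a <= 1 -> strip (line a b) C (x, y) -> Rabs (y - a * x - b) <= C.
Proof.
  intros Ha Hs; apply strip_line_gap in Hs; cbn [fst snd] in Hs.
  set (s := sqrt (1 + a ^ 2)) in Hs.
  assert (Hs1 : 1 <= s) by apply one_le_sqrt_1_add_sqr.
  assert (Hs2 : s <= 2).
  { replace 2 with (sqrt 4) by (rewrite <- (sqrt_pow2 2) by lra; f_equal; ring).
    apply sqrt_le_1_alt; apply Rabs_le_between in Ha; nra. }
  pose proof (Rabs_pos (y - a * x - b)).
  assert (HC : 0 <= C) by nra.
  assert (C / 2 * s <= C / 2 * 2) by (apply Rmult_le_compat_l; lra).
  lra.
Qed.

Lemma strips_abscissa_close (a1 a2 b1 b2 C x y : R) :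
  a1 <> a2 ->
  Rabs (y - a1 * x - b1) <= C -> Rabs (y - a2 * x - b2) <= C ->
  Rabs (x - (b2 - b1) / (a1 - a2)) <= 2 * C / Rabs (a1 - a2).
Proof.
  intros Ha H1 H2.
  assert (Hd : 0 < Rabs (a1 - a2)) by (apply Rabs_pos_lt; lra).
  apply Rmult_le_reg_r with (Rabs (a1 - a2)); [exact Hd|].
  rewrite <- Rabs_mult.
  replace ((x - (b2 - b1) / (a1 - a2)) * (a1 - a2))
    with ((y - a2 * x - b2) - (y - a1 * x - b1)) by (field; lra).
  replace (2 * C / Rabs (a1 - a2) * Rabs (a1 - a2)) with (C + C) by (field; lra).
  eapply Rle_trans; [apply Rabs_triang|]; rewrite Rabs_Ropp; lra.
Qed.

Lemma NoDup_sheared_box_length (L : list (Z * Z)) (lo : Z) (F : Z -> Z) (nx ny : nat) :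
  NoDup L ->
  (forall z, In z L -> (0 <= fst z - lo < Z.of_nat nx)%Z /\
                       (0 <= snd z - F (fst z) < Z.of_nat ny)%Z) ->
  (length L <= nx * ny)%nat.
Proof.
  intros HL Hin.
  set (g := fun z : Z * Z => (fst z - lo, snd z - F (fst z))%Z).
  assert (Hg : NoDup (map g L)).
  { apply NoDup_map_NoDup_ForallPairs; [|exact HL].
    intros [x y] [x' y'] _ _; unfold g; simpl; intros Hxy; inversion Hxy.
    assert (x = x') by lia; subst x'; f_equal; lia. }
  set (box := list_prod (map Z.of_nat (seq 0 nx)) (map Z.of_nat (seq 0 ny))).
  assert (Hincl : incl (map g L) box).
  { intros [i j] Hij; apply in_map_iff in Hij; destruct Hij as [[x y] [Hxy Hz]].
    unfold g in Hxy; simpl in Hxy; inversion Hxy; subst i j.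
    destruct (Hin _ Hz) as [Hx Hy]; simpl in Hx, Hy.
    apply in_prod_iff; split; apply in_map_iff.
    - exists (Z.to_nat (x - lo)); split; [lia | apply in_seq; lia].
    - exists (Z.to_nat (y - F x)); split; [lia | apply in_seq; lia]. }
  pose proof (NoDup_incl_length Hg Hincl) as Hlen.
  unfold box in Hlen; rewrite length_map, length_prod, !length_map, !length_seq in Hlen.
  exact Hlen.
Qed.

Lemma lattice_window (r : R) : 0 <= r ->
  exists n : nat, INR n <= r + 2 /\
    forall (u : R) (k : Z), u <= IZR k <= u + r -> (0 <= k - Int_part u < Z.of_nat n)%Z.
Proof.
  intros hr.
  destruct (base_Int_part (r + 1)) as [Hr1 Hr2].
  assert (Hp : (0 <= Int_part (r + 1))%Z) by (apply le_IZR; lra).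
  exists (S (Z.to_nat (Int_part (r + 1)))); split.
  - rewrite S_INR, INR_IZR_INZ, Z2Nat.id by lia; lra.
  - intros u k Hk.
    destruct (base_Int_part u) as [Hu1 Hu2].
    assert (H0 : (0 <= k - Int_part u)%Z) by (apply le_IZR; rewrite minus_IZR; lra).
    assert (H1 : (k - Int_part u - 1 < Int_part (r + 1))%Z)
      by (apply lt_IZR; rewrite !minus_IZR; lra).
    lia.
Qed.

Lemma N_le_le (D : region) (M M' : R) : M <= M' -> N_le D M -> N_le D M'.
Proof. intros HM HD L HL Hin; specialize (HD L HL Hin); lra. Qed.

Lemma N_le_sheared_box (D : region) (u rx ry : R) (g : Z -> R) :
  0 <= rx -> 0 <= ry ->
  (forall z, D (zpt z) ->
     u <= IZR (fst z) <= u + rx /\ g (fst z) <= IZR (snd z) <= g (fst z) + ry) ->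
  N_le D ((rx + 2) * (ry + 2)).
Proof.
  intros Hrx Hry Hbox L HL Hin.
  destruct (lattice_window rx Hrx) as [nx [Hnx Hx]].
  destruct (lattice_window ry Hry) as [ny [Hny Hy]].
  assert (Hlen : (length L <= nx * ny)%nat).
  { apply (NoDup_sheared_box_length L (Int_part u) (fun x => Int_part (g x))); [exact HL|].
    intros z Hz; destruct (Hbox z (Hin z Hz)); split; auto. }
  apply le_INR in Hlen; rewrite mult_INR in Hlen.
  pose proof (pos_INR nx); pose proof (pos_INR ny).
  eapply Rle_trans; [exact Hlen | apply Rmult_le_compat; lra].
Qed.

Lemma integer_line_slope_bounds (w e : nat) :
  (2 <= w)%nat -> (e <= w - 1)%nat -> 0 <= INR e / INR (w - 1) <= 1.
Proof.
  intros Hw He.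
  assert (HW : 0 < INR (w - 1)) by (apply lt_0_INR; lia).
  apply le_INR in He; pose proof (pos_INR e).
  split; [apply Rdiv_le_0_compat; lra|].
  apply Rmult_le_reg_r with (INR (w - 1)); [exact HW|].
  field_simplify; lra.
Qed.

Lemma integer_line_strip_vertical (w e : nat) (b C x y : R) :
  (2 <= w)%nat -> (e <= w - 1)%nat -> strip (integer_line w e b) C (x, y) ->
  Rabs (y - INR e / INR (w - 1) * x - b) <= C.
Proof.
  intros Hw He; apply strip_line_vertical.
  pose proof (integer_line_slope_bounds w e Hw He); apply Rabs_le; lra.
Qed.

Lemma elevation_gap_bounds (w e1 e2 : nat) :
  (e1 <= w - 1)%nat -> (e2 <= w - 1)%nat -> e1 <> e2 ->
  1 <= Rabs (INR e1 - INR e2) <= INR (w - 1).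
Proof.
  intros He1 He2 Hne.
  apply le_INR in He1, He2; pose proof (pos_INR e1); pose proof (pos_INR e2).
  destruct (Nat.lt_total e1 e2) as [Hlt | [Heq | Hlt]]; [| contradiction |];
    apply le_INR in Hlt; rewrite S_INR in Hlt.
  - rewrite Rabs_left1 by lra; lra.
  - rewrite Rabs_pos_eq by lra; lra.
Qed.

Lemma elevation_box_size_le (C W d : R) : 0 <= C -> 1 <= d <= W ->
  (4 * C / (d / W) + 2) * (2 * C + 2) <= (4 * C + 2) * (2 * C + 2) * (W + 1) / d.
Proof.
  intros HC Hd.
  replace (4 * C / (d / W)) with (4 * C * W / d) by (field; lra).
  apply Rmult_le_reg_r with d; [lra|].
  replace ((4 * C * W / d + 2) * (2 * C + 2) * d) with ((4 * C * W + 2 * d) * (2 * C + 2))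
    by (field; lra).
  replace ((4 * C + 2) * (2 * C + 2) * (W + 1) / d * d)
    with ((4 * C + 2) * (2 * C + 2) * (W + 1)) by (field; lra).
  nra.
Qed.

Theorem corollary1 (C : R) (hC : 0 < C) :
  exists C1 : R, 0 < C1 /\
    forall (w e1 e2 : nat) (b1 b2 : R),
      (2 <= w)%nat ->
      (e1 <= w - 1)%nat -> (e2 <= w - 1)%nat -> e1 <> e2 ->
      N_le (inter (strip (integer_line w e1 b1) C) (strip (integer_line w e2 b2) C))
           (C1 * INR w / Rabs (INR e1 - INR e2)).
Proof.
  exists ((4 * C + 2) * (2 * C + 2)); split; [nra|].
  intros w e1 e2 b1 b2 Hw He1 He2 Hne.
  set (W := INR (w - 1)); set (d := Rabs (INR e1 - INR e2)).
  set (a1 := INR e1 / W); set (a2 := INR e2 / W).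
  assert (HW : INR w = W + 1) by (unfold W; rewrite minus_INR by lia; simpl; lra).
  assert (Hd : 1 <= d <= W) by now apply elevation_gap_bounds.
  assert (Hslope : Rabs (a1 - a2) = d / W).
  { unfold a1, a2, d; replace (INR e1 / W - INR e2 / W) with ((INR e1 - INR e2) / W)
      by (field; lra).
    rewrite Rabs_div, (Rabs_pos_eq W) by lra; reflexivity. }
  assert (Ha : a1 <> a2).
  { intros Heq; rewrite Heq, Rminus_diag, Rabs_R0 in Hslope.
    assert (0 < d / W) by (apply Rdiv_lt_0_compat; lra); lra. }
  set (rx := 4 * C / Rabs (a1 - a2)).
  apply (N_le_le _ ((rx + 2) * (2 * C + 2))).
  - unfold rx; rewrite HW, Hslope; apply elevation_box_size_le; [lra | exact Hd].
  - apply (N_le_sheared_box _ ((b2 - b1) / (a1 - a2) - 2 * C / Rabs (a1 - a2)) _ _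
             (fun p => a1 * IZR p + b1 - C)); [| lra |].
    + unfold rx; apply Rdiv_le_0_compat; [lra | apply Rabs_pos_lt; lra].
    + intros [p q] [S1 S2]; cbn [fst snd zpt] in *.
      apply integer_line_strip_vertical in S1, S2; [| assumption ..].
      cbn [fst snd] in S1, S2; fold W a1 a2 in S1, S2.
      pose proof (strips_abscissa_close _ _ _ _ _ _ _ Ha S1 S2) as Hx.
      apply Rabs_le_between in Hx, S1; unfold rx; lra.
Qed.
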